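(* Let $\lambda,\mu\in\mathbb{C}$ and integers $m,N_T\ge1$. Let $E_\Delta^F=I-A_c^{-1}A_S$ and $E_\Delta^{FCF}=(I-A_c^{-1}A_S)(I-A_S)$ with $A_c=\mathcal{B}_{N_T}(\mu)$, $A_S=\mathcal{B}_{N_T}(\lambda^m)$. Then $E_\Delta^F$ is the lower triangular Toeplitz matrix whose $(i,j)$ entry is $(\lambda^m-\mu)\mu^{i-j-1}$ for $i>j$ and $0$ otherwise, and $E_\Delta^{FCF}$ is the lower triangular Toeplitz matrix whose $(i,j)$ entry is $(\lambda^m-\mu)\lambda^m\mu^{i-j-2}$ for $i\ge j+2$ and $0$ otherwise. Moreover, for every integer $k\ge1$ with $k\le N_T$, $$\|(E_\Delta^F)^k\|_1=\|(E_\Delta^F)^k\|_\infty=|\lambda^m-\mu|^k\sum_{j=0}^{N_T-k}\binom{j+k-1}{j}|\mu|^j,$$ and for every integer $k\ge1$ with $2k\le N_T$, $$\|(E_\Delta^{FCF})^k\|_1=\|(E_\Delta^{FCF})^k\|_\infty=|\lambda^m-\mu|^k|\lambda|^{mk}\sum_{j=0}^{N_T-2k}\binom{j+k-1}{j}|\mu|^j.$$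
   Context: For a scalar $g$, $\mathcal{B}_{N_T}(g)$ denotes the $(N_T+1)\times(N_T+1)$ matrix (rows/columns indexed $0,\dots,N_T$) with ones on the diagonal, $-g$ on the first subdiagonal, and zeros elsewhere. $\|\cdot\|_1$ and $\|\cdot\|_\infty$ are the maximum absolute column sum and maximum absolute row sum matrix norms. *)

(* The complex numbers are represented by an arbitrary
   numClosedFieldType C (of which the complex field is the model). *)
From HB Require Import structures.
From mathcomp Require Import all_boot all_order all_algebra.
Set Implicit Arguments. Unset Strict Implicit. Unset Printing Implicit Defensive.
Import Order.TTheory GRing.Theory Num.Theory.
Local Open Scope ring_scope.

Definition bidiag {C : nzRingType} (N : nat) (g : C) : 'M[C]_(N.+1) :=
  \matrix_(i, j) (if i == j :> nat then 1
                  else if i == j.+1 :> nat then - g else 0).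

Definition norm1 {C : numDomainType} (n : nat) (A : 'M[C]_n) : C :=
  \big[Num.max/0]_(j < n) \sum_(i < n) `|A i j|.

Definition normInf {C : numDomainType} (n : nat) (A : 'M[C]_n) : C :=
  \big[Num.max/0]_(i < n) \sum_(j < n) `|A i j|.

From HB Require Import structures.
From mathcomp Require Import all_boot all_order all_algebra.
From mathcomp Require Import zify ring.
Set Implicit Arguments. Unset Strict Implicit. Unset Printing Implicit Defensive.
Import Order.TTheory GRing.Theory Num.Theory.
Local Open Scope ring_scope.

(* Every matrix in the statement is lower-triangular Toeplitz:
   it is determined by a symbol a : nat -> R through (i, j) |-> a (i - j) for
   j <= i.  Such matrices form an algebra in which the product is the
   convolution of symbols, so powers correspond to convolution powers.
   1. Lower-triangular Toeplitz calculus: products, powers, and the fact that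
      both the maximal column sum and the maximal row sum of such a matrix
      equal the l1-norm of its truncated symbol (attained by the first column
      and by the last row).
   2. Shifted geometric symbols d |-> a mu^(d-s) (for d >= s): their k-th
      convolution power is again explicit, the binomial coefficients coming
      from the hockey-stick identity.
   3. B_N(g) has symbol (1, -g, 0, ...) and B_N(mu)^-1 the geometric symbol
      d |-> mu^d, so E^F and E^FCF have shifted geometric symbols with shifts
      1 and 2; the theorem follows by combining 1-3. *)

Lemma sum_interval (R : nzRingType) n (P : pred nat) (F : nat -> R) lo hi :
  (forall t, t < n -> P t = (lo <= t) && (t < hi))%N -> (hi <= n)%N ->
  \sum_(t < n) (if P t then F t else 0) = \sum_(u < hi - lo) F (u + lo)%N.
Proof.
move=> HP hn; rewrite -(big_mkord xpredT (fun t => if P t then F t else 0)).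
have out t : (t < n)%N -> ~~ (lo <= t < hi)%N -> (if P t then F t else 0) = 0.
  by move=> tn; rewrite HP // => /negbTE ->.
case: (leqP lo hi) => hlh; last first.
  rewrite big1_seq; last by move=> t; rewrite mem_index_iota => ht; apply: out; lia.
  have -> : (hi - lo = 0)%N by lia.
  by rewrite big_ord0.
rewrite (@big_cat_nat _ _ _ lo 0 n) ?(leq_trans hlh hn) //=.
rewrite (@big_cat_nat _ _ _ hi lo n) //=.
rewrite big1_seq ?add0r; last first.
  by move=> t /andP[_]; rewrite mem_index_iota => ht; apply: out; lia.
rewrite [X in _ + X]big1_seq ?addr0; last first.
  by move=> t /andP[_]; rewrite mem_index_iota => ht; apply: out; lia.
rewrite (eq_big_nat _ _ (F2 := F)); last by move=> t ht; rewrite HP ?ht //; lia.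
by rewrite -[lo]add0n big_addn big_mkord add0n.
Qed.

Lemma sum_prefix_le (R : numDomainType) (g : nat -> R) m1 m2 :
  (forall u, 0 <= g u) -> (m1 <= m2)%N ->
  \sum_(u < m1) g u <= \sum_(u < m2) g u.
Proof.
move=> g0 h; rewrite -!(big_mkord xpredT) (@big_cat_nat _ _ _ m1 0 m2) //=.
by rewrite lerDl sumr_ge0.
Qed.

(* A maximum of nonnegative values over a sequence is the value dominating
   all the others; Num.max/0 is no monoid law on a partial order, so bigD1
   does not apply. *)
Lemma bigmax_attained (R : numDomainType) (I : eqType) (r : seq I) (F : I -> R) j0 :
  (forall j, 0 <= F j <= F j0) -> j0 \in r ->
  \big[Num.max/0]_(j <- r) F j = F j0.
Proof.
move=> hF; elim: r => [//|x r IH].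
have bound : 0 <= \big[Num.max/0]_(j <- r) F j <= F j0.
  apply: (big_ind (fun x => 0 <= x <= F j0)) => [|x' y hx hy|j _].
  - by rewrite lexx; case/andP: (hF j0).
  - by rewrite /Num.max /Order.max; case: ifP.
  - exact: hF.
rewrite in_cons big_cons /Num.max /Order.max => /orP[/eqP <-|hin].
  by case/andP: bound => _ h; rewrite le_gtF.
rewrite (IH hin); case: ifP => // hlt.
have /andP[_ hle] := hF x; apply/eqP; move: hlt; rewrite lt_def hle andbT.
by move/negbT; rewrite negbK eq_sym.
Qed.

Definition tmx (R : nzRingType) (n : nat) (a : nat -> R) : 'M[R]_n :=
  \matrix_(i, j) (if (j <= i)%N then a (i - j)%N else 0).

Definition conv (R : nzRingType) (a b : nat -> R) (d : nat) : R :=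
  \sum_(t < d.+1) a (d - t)%N * b t.

(* conv_pow f k is the (k+1)-th convolution power of f. *)
Fixpoint conv_pow (R : nzRingType) (f : nat -> R) (k : nat) : nat -> R :=
  if k is k'.+1 then conv (conv_pow f k') f else f.

Lemma eq_tmx (R : nzRingType) n (f g : nat -> R) :
  (forall d, f d = g d) -> tmx n f = tmx n g.
Proof. by move=> e; apply/matrixP => i j; rewrite !mxE e. Qed.

Lemma tmx_delta (R : nzRingType) n :
  1%:M = tmx n (fun d => (d == 0%N)%:R) :> 'M[R]_n.
Proof.
apply/matrixP => i j; rewrite !mxE -val_eqE /=; case: leqP => h.
  by congr (_%:R); apply/eqP/eqP; lia.
by rewrite eqn_leq [(j <= i)%N]leqNgt h andbF.
Qed.

Lemma tmx_mul (R : nzRingType) n (a b : nat -> R) :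
  tmx n a *m tmx n b = tmx n (conv a b).
Proof.
apply/matrixP => i j; rewrite !mxE.
under eq_bigr => l _ do rewrite !mxE.
rewrite (eq_bigr (fun l : 'I_n => if (j <= l < i.+1)%N
                   then a (i - l)%N * b (l - j)%N else 0)); last first.
  move=> l _; rewrite ltnS.
  by case: (leqP l i); case: (leqP j l); rewrite /= ?mul0r ?mulr0.
rewrite (sum_interval (P := fun l => (j <= l < i.+1)%N)
  (fun l => a (i - l)%N * b (l - j)%N) (lo := j) (hi := i.+1)) //.
case: leqP => hji; last first.
  have -> : (i.+1 - j = 0)%N by lia.
  by rewrite big_ord0.
have -> : (i.+1 - j = (i - j).+1)%N by lia.
by apply: eq_bigr => u _; congr (a _ * b _); lia.
Qed.

Lemma tmx_pow (R : nzRingType) n (f : nat -> R) k :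
  tmx n.+1 f ^+ k.+1 = tmx n.+1 (conv_pow f k).
Proof.
elim: k => [|k IH]; first by rewrite expr1.
by rewrite exprSr IH /= -tmx_mul.
Qed.

(* Both norms of a lower-triangular Toeplitz matrix equal the l1-norm of its
   symbol: column j and row i carry the first N.+1 - j, resp. i.+1, symbol
   values, so the first column and the last row are maximal. *)
Lemma tmx_norms (R : numDomainType) N (f : nat -> R) :
  norm1 (tmx N.+1 f) = \sum_(d < N.+1) `|f d| /\
  normInf (tmx N.+1 f) = \sum_(d < N.+1) `|f d|.
Proof.
set g := fun d => `|f d|.
have g0 d : 0 <= g d by apply: normr_ge0.
have entry (i j : 'I_N.+1) :
    `|tmx N.+1 f i j| = if (j <= i)%N then g (i - j)%N else 0.
  by rewrite mxE; case: leqP; rewrite ?normr0.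
have col (j : 'I_N.+1) :
    \sum_(i < N.+1) `|tmx N.+1 f i j| = \sum_(d < N.+1 - j) g d.
  under eq_bigr => i _ do rewrite entry.
  rewrite (sum_interval (P := fun i => (j <= i)%N) (fun i => g (i - j)%N)
    (lo := j) (hi := N.+1)) //; last by move=> t ht; rewrite ht andbT.
  by apply: eq_bigr => u _; rewrite addnK.
have row (i : 'I_N.+1) :
    \sum_(j < N.+1) `|tmx N.+1 f i j| = \sum_(d < i.+1) g d.
  under eq_bigr => j _ do rewrite entry.
  rewrite (sum_interval (P := fun j => (j <= i)%N) (fun j => g (i - j)%N)
    (lo := 0) (hi := i.+1)) //.
  rewrite subn0 -[RHS](big_mkord xpredT g) big_rev_mkord subn0.
  by apply: eq_bigr => u _; congr (g _); have := ltn_ord u; lia.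
split.
- rewrite /norm1; under eq_bigr => j _ do rewrite col.
  rewrite (@bigmax_attained _ _ _ _ ord0) ?mem_index_enum // => j.
  by rewrite sumr_ge0 //= sum_prefix_le //; lia.
- rewrite /normInf; under eq_bigr => i _ do rewrite row.
  rewrite (@bigmax_attained _ _ _ _ ord_max) ?mem_index_enum // => i.
  by rewrite sumr_ge0 //= sum_prefix_le //; have := ltn_ord i; lia.
Qed.

Lemma hockey_stick D k :
  (\sum_(u < D.+1) 'C(D - u + k, k) = 'C(D + k.+1, k.+1))%N.
Proof.
elim: D => [|D IH]; first by rewrite big_ord_recl big_ord0 /= addn0 !binn.
rewrite big_ord_recl /=.
under eq_bigr => u _ do rewrite /bump /= add1n subSS.
rewrite IH subn0.
have -> : (D.+1 + k.+1 = (D + k.+1).+1)%N by lia.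
by rewrite binS addnC; congr (_ + 'C(_, _))%N; lia.
Qed.

Definition shifted_geom (R : nzRingType) (mu a : R) (s d : nat) : R :=
  if (s <= d)%N then a * mu ^+ (d - s) else 0.

Lemma conv_pow_shifted_geom (R : comNzRingType) (mu a : R) s k d :
  conv_pow (shifted_geom mu a s) k d =
  if (s * k.+1 <= d)%N then
    a ^+ k.+1 * ('C(d - s * k.+1 + k, k))%:R * mu ^+ (d - s * k.+1)
  else 0.
Proof.
elim: k d => [|k IH] d.
  by rewrite /= /shifted_geom muln1 bin0 expr1 mulr1; case: ifP.
set r := (s * k.+1)%N; rewrite /= /conv.
under eq_bigr => t _ do rewrite IH -/r.
pose T t := a ^+ k.+1 * ('C(d - t - r + k, k))%:R * mu ^+ (d - t - r)
            * (a * mu ^+ (t - s)).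
rewrite (eq_bigr (fun t : 'I_d.+1 =>
           if (s <= t < (d - r).+1)%N then T t else 0)); last first.
  move=> t _; have ht := ltn_ord t; rewrite /shifted_geom /T.
  case: (leqP s t) => h1; last by rewrite mulr0.
  case: (leqP r (d - t)) => h2; first by rewrite /= ifT //; lia.
  by rewrite mul0r /= ifF //; apply/negbTE; rewrite -leqNgt; nia.
rewrite (sum_interval (P := fun t => (s <= t < (d - r).+1)%N) T
  (lo := s) (hi := (d - r).+1)) //; last by lia.
case: leqP => hd; last first.
  have -> : ((d - r).+1 - s = 0)%N by lia.
  by rewrite big_ord0.
set D := (d - s * k.+2)%N.
have -> : ((d - r).+1 - s = D.+1)%N by rewrite /D /r; lia.
rewrite (eq_bigr (fun u : 'I_D.+1 =>
           a ^+ k.+2 * mu ^+ D * ('C(D - u + k, k))%:R)); last first.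
  move=> u _; have hu := ltn_ord u; rewrite /T.
  have -> : (d - (u + s) - r = D - u)%N by rewrite /D /r; lia.
  have -> : (u + s - s = u)%N by lia.
  have -> : mu ^+ D = mu ^+ (D - u) * mu ^+ u by rewrite -exprD subnK //; lia.
  by rewrite !exprS; ring.
by rewrite -mulr_sumr -natr_sum hockey_stick mulrAC.
Qed.

Lemma sum_abs_conv_pow (R : numDomainType) (mu a : R) s k N :
  (s * k.+1 <= N)%N ->
  \sum_(d < N.+1) `|conv_pow (shifted_geom mu a s) k d| =
  `|a| ^+ k.+1 * \sum_(u < (N - s * k.+1).+1) ('C(u + k, k))%:R * `|mu| ^+ u.
Proof.
move=> hr; set r := (s * k.+1)%N.
pose g u := `|a| ^+ k.+1 * ('C(u + k, k))%:R * `|mu| ^+ u.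
under eq_bigr => d _ do rewrite conv_pow_shifted_geom -/r.
rewrite (eq_bigr (fun d : 'I_N.+1 => if (r <= d)%N then g (d - r)%N else 0));
  last first.
  by move=> d _; case: ifP; rewrite ?normr0 // !normrM !normrX normr_nat.
rewrite (sum_interval (P := fun d => (r <= d)%N) (fun d => g (d - r)%N)
  (lo := r) (hi := N.+1)) //; last by move=> t ht; rewrite ht andbT.
rewrite mulr_sumr -subSn //; apply: eq_bigr => u _.
by rewrite addnK /g mulrA.
Qed.

(* Converting the binomial sum of the previous lemma to the paper's form. *)
Lemma binomial_sum_reindex (R : nzRingType) (x : R) n k :
  \sum_(u < n) ('C(u + k, k))%:R * x ^+ u =
  \sum_(0 <= j < n) ('C(j + k.+1 - 1, j))%:R * x ^+ j.
Proof.
rewrite big_mkord; apply: eq_bigr => j _.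
have -> : (j + k.+1 - 1 = j + k)%N by lia.
by rewrite -bin_sub ?leq_addl // addnK.
Qed.

Definition bidiag_symbol (R : nzRingType) (g : R) (d : nat) : R :=
  if d == 0%N then 1 else if d == 1%N then - g else 0.

Lemma bidiag_tmx (R : nzRingType) N (g : R) :
  bidiag N g = tmx N.+1 (bidiag_symbol g).
Proof.
apply/matrixP => i j; rewrite !mxE /bidiag_symbol.
case: (ltngtP j i) => h.
- by do 3?case: eqP; move=> *; rewrite //; lia.
- by case: eqP => // e1; lia.
- by rewrite h subnn.
Qed.

Lemma conv_geom_bidiag (R : comNzRingType) (mu g : R) d :
  conv (fun e => mu ^+ e) (bidiag_symbol g) d =
  if d is d'.+1 then mu ^+ d'.+1 - g * mu ^+ d' else 1.
Proof.
rewrite /conv; case: d => [|d].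
  by rewrite big_ord_recl big_ord0 /bidiag_symbol /= expr0 mulr1 addr0.
rewrite big_ord_recl big_ord_recl /= big1 => [|t _]; last first.
  by rewrite /bidiag_symbol /= mulr0.
by rewrite /bidiag_symbol /= subn0 mulr1 addr0 subSS subn0 mulrN mulrC.
Qed.

Lemma invmx_bidiag (C : comUnitRingType) N (mu : C) :
  invmx (bidiag N mu) = tmx N.+1 (fun e => mu ^+ e).
Proof.
have inv : tmx N.+1 (fun e => mu ^+ e) *m bidiag N mu = 1%:M.
  rewrite bidiag_tmx tmx_mul tmx_delta; apply: eq_tmx => d.
  by rewrite conv_geom_bidiag; case: d => //= d; rewrite exprS subrr.
have [_ unitB] := mulmx1_unit inv.
by rewrite -[RHS]mulmx1 -(mulmxV unitB) mulmxA inv mul1mx.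
Qed.

Lemma EF_tmx (C : comUnitRingType) N (mu g : C) :
  1%:M - invmx (bidiag N mu) *m bidiag N g = tmx N.+1 (shifted_geom mu (g - mu) 1).
Proof.
rewrite invmx_bidiag bidiag_tmx tmx_mul tmx_delta.
apply/matrixP => i j; rewrite !mxE /shifted_geom.
case: (leqP j i) => h; last by rewrite subr0.
rewrite conv_geom_bidiag; case: (i - j)%N => [|d] /=; first by rewrite subrr.
by rewrite subn1 /= exprS; ring.
Qed.

Lemma one_sub_bidiag (R : nzRingType) N (g : R) :
  1%:M - bidiag N g = tmx N.+1 (fun e => if e == 1%N then g else 0).
Proof.
rewrite bidiag_tmx tmx_delta; apply/matrixP => i j; rewrite !mxE /bidiag_symbol.
case: (leqP j i) => h; last by rewrite subr0.
by case: (i - j)%N => [|[|d]] /=; rewrite ?subrr ?sub0r ?opprK ?subr0.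
Qed.

Lemma conv_shifted_geom_shift (R : comNzRingType) (mu c g : R) d :
  conv (shifted_geom mu c 1) (fun e => if e == 1%N then g else 0) d =
  shifted_geom mu (c * g) 2 d.
Proof.
rewrite /conv /shifted_geom; case: d => [|d].
  by rewrite big_ord_recl big_ord0 /= mulr0 addr0.
rewrite big_ord_recl big_ord_recl /= big1 => [|t _]; last by rewrite mulr0.
rewrite mulr0 add0r addr0 subn1 /=.
case: d => [|d] /=; first by rewrite mul0r.
have -> : (d.+2 - 2 = d)%N by lia.
by rewrite mulrAC.
Qed.

Lemma tmx_shifted_geomE (R : nzRingType) N s (c mu : R) :
  tmx N.+1 (shifted_geom mu c s) =
  \matrix_(i, j) (if (j + s <= i)%N then c * mu ^+ (i - j - s) else 0).
Proof.
apply/matrixP => i j; rewrite !mxE /shifted_geom.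
case: (leqP j i) => h1; last by case: leqP => // h2; lia.
by case: (leqP s (i - j)) => h2; case: leqP => // h3; lia.
Qed.

Lemma norms_pow_shifted_geom (R : numDomainType) (mu a : R) s k N :
  (1 <= k)%N -> (s * k <= N)%N ->
  let S := `|a| ^+ k * \sum_(0 <= j < (N - s * k).+1)
                          ('C(j + k - 1, j))%:R * `|mu| ^+ j in
  norm1 (tmx N.+1 (shifted_geom mu a s) ^+ k) = S /\
  normInf (tmx N.+1 (shifted_geom mu a s) ^+ k) = S.
Proof.
case: k => [//|k] _ hk; rewrite tmx_pow.
by have [-> ->] := tmx_norms N (conv_pow (shifted_geom mu a s) k);
  rewrite sum_abs_conv_pow // binomial_sum_reindex.
Qed.

Theorem mainTheorem2 (C : numClosedFieldType) (lambda mu : C) (m N : nat)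
  (hm : (1 <= m)%N) (hN : (1 <= N)%N) :
  let Ac := bidiag N mu in
  let AS := bidiag N (lambda ^+ m) in
  let EF := 1%:M - invmx Ac *m AS in
  let EFCF := (1%:M - invmx Ac *m AS) *m (1%:M - AS) in
  [/\ EF = \matrix_(i, j) (if (j < i)%N
                           then (lambda ^+ m - mu) * mu ^+ (i - j - 1)
                           else 0),
      EFCF = \matrix_(i, j) (if (j.+2 <= i)%N
                             then (lambda ^+ m - mu) * lambda ^+ m * mu ^+ (i - j - 2)
                             else 0),
      (forall k : nat, (1 <= k)%N -> (k <= N)%N ->
         norm1 (EF ^+ k) = `|lambda ^+ m - mu| ^+ k *
           (\sum_(0 <= j < (N - k).+1) ('C(j + k - 1, j))%:R * `|mu| ^+ j)
         /\ normInf (EF ^+ k) = `|lambda ^+ m - mu| ^+ k *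
           (\sum_(0 <= j < (N - k).+1) ('C(j + k - 1, j))%:R * `|mu| ^+ j))
    & (forall k : nat, (1 <= k)%N -> (2 * k <= N)%N ->
         norm1 (EFCF ^+ k) = `|lambda ^+ m - mu| ^+ k * `|lambda| ^+ (m * k) *
           (\sum_(0 <= j < (N - 2 * k).+1) ('C(j + k - 1, j))%:R * `|mu| ^+ j)
         /\ normInf (EFCF ^+ k) = `|lambda ^+ m - mu| ^+ k * `|lambda| ^+ (m * k) *
           (\sum_(0 <= j < (N - 2 * k).+1) ('C(j + k - 1, j))%:R * `|mu| ^+ j))].
Proof.
move=> Ac AS EF EFCF; set c := lambda ^+ m - mu.
have hEF : EF = tmx N.+1 (shifted_geom mu c 1) by apply: EF_tmx.
have hEFCF : EFCF = tmx N.+1 (shifted_geom mu (c * lambda ^+ m) 2).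
  rewrite /EFCF -/EF hEF one_sub_bidiag tmx_mul.
  by apply: eq_tmx => d; apply: conv_shifted_geom_shift.
split.
- by rewrite hEF tmx_shifted_geomE; apply/matrixP => i j; rewrite !mxE addn1.
- by rewrite hEFCF tmx_shifted_geomE; apply/matrixP => i j; rewrite !mxE addn2.
- move=> k hk hkN; have hk1 : (1 * k <= N)%N by rewrite mul1n.
  rewrite hEF; have [-> ->] := @norms_pow_shifted_geom C mu c 1 k N hk hk1.
  by rewrite mul1n.
- move=> k hk hkN; rewrite hEFCF.
  have [-> ->] := @norms_pow_shifted_geom C mu (c * lambda ^+ m) 2 k N hk hkN.
  by rewrite normrM exprMn normrX -exprM.
Qed.
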